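(* Let $(P,\leqslant)$ be a conditionally-complete interpolating poset and let $P^* := \{x \in P : \exists\, y \in P,\ y \ll x\}$ with the induced order. Then $(P^* )^* = P^*$, where $(P^* )^* := \{x \in P^* : \exists\, y \in P^*,\ y \ll_{P^*} x\}$.
   Context: A poset is conditionally-complete if every nonempty subset bounded above has a supremum. A nonempty subset $D$ is directed if any two elements of $D$ have an upper bound in $D$. For a poset $R$ and $x,y \in R$, $x \ll_R y$ means: for every directed subset $D$ of $R$ bounded above in $R$ with supremum $d_0$ in $R$, $y \leqslant d_0$ implies $x \leqslant d$ for some $d \in D$; write $\ll$ for $\ll_P$. $P$ is interpolating if whenever $x \ll y$ there is $z \in P$ with $x \ll z \ll y$. *)

From HB Require Import structures.
From mathcomp Require Import all_boot all_order.
Set Implicit Arguments. Unset Strict Implicit. Unset Printing Implicit Defensive.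
Import Order.TTheory.
Local Open Scope order_scope.

Section Defs.
Context {disp : Order.disp_t} {T : porderType disp}.

Definition fullset : T -> Prop := fun _ => True.

Definition ub_in (R D : T -> Prop) (x : T) : Prop :=
  R x /\ forall d, D d -> d <= x.

Definition is_sup_in (R D : T -> Prop) (x : T) : Prop :=
  ub_in R D x /\ forall y, ub_in R D y -> x <= y.

Definition directed_in (R D : T -> Prop) : Prop :=
  (forall d, D d -> R d) /\ (exists d, D d) /\
  forall a b, D a -> D b -> exists c, [/\ D c, a <= c & b <= c].

Definition way_below_in (R : T -> Prop) (x y : T) : Prop :=
  forall (D : T -> Prop) (d0 : T),
    directed_in R D -> (exists u, ub_in R D u) -> is_sup_in R D d0 ->
    y <= d0 -> exists d, D d /\ x <= d.

Definition cond_complete : Prop :=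
  forall D : T -> Prop, (exists d, D d) -> (exists u, ub_in fullset D u) ->
    exists s, is_sup_in fullset D s.

Definition interpolating : Prop :=
  forall x y, way_below_in fullset x y ->
    exists z, way_below_in fullset x z /\ way_below_in fullset z y.

Definition star (R : T -> Prop) : T -> Prop :=
  fun x => R x /\ exists y, R y /\ way_below_in R y x.

End Defs.

From mathcomp Require Import all_boot all_order.
Import Order.TTheory.
Local Open Scope order_scope.

(* For x in P^* pick y << x and interpolate y << z << x; then z lies in P^*.
   Since P^* is upper closed in P, the P-supremum of a directed subset of P^*
   lies in P^* and sits above its P^*-supremum, so z << x in P gives
   z <<_{P^*} x. *)

Section WayBelow.
Context {disp : Order.disp_t} {T : porderType disp}.

Definition upper_closed (S : T -> Prop) : Prop :=
  forall a b, S a -> a <= b -> S b.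

Lemma way_below_in_le (R : T -> Prop) (y x x' : T) :
  way_below_in R y x -> x <= x' -> way_below_in R y x'.
Proof.
move=> wyx le_xx' D d0 Ddir Dub Dsup le_x'd0.
exact: wyx Ddir Dub Dsup (le_trans le_xx' le_x'd0).
Qed.

Lemma upper_closed_star_full : upper_closed (star (@fullset _ T)).
Proof.
move=> a b [_ [y [_ wya]]] le_ab; split=> //.
by exists y; split=> //; apply: way_below_in_le wya le_ab.
Qed.

Lemma way_below_in_upper_closed (S : T -> Prop) (z x : T) :
  @cond_complete _ T -> upper_closed S ->
  way_below_in fullset z x -> way_below_in S z x.
Proof.
move=> cc upS wzx D d0 [DS [[d Dd] Ddir]] [u [Su uD]] [[_ d0D] d0l] le_xd0.
have [s [[_ sD] sl]] := cc D (ex_intro _ d Dd) (ex_intro _ u (conj I uD)).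
have Ss : S s by apply: upS (DS d Dd) (sD d Dd).
have le_d0s : d0 <= s by apply: d0l.
apply: (wzx D s).
- by split=> //; split=> //; exists d.
- by exists u.
- by split; last by move=> v [_ vD]; apply: sl.
- exact: le_trans le_xd0 le_d0s.
Qed.

End WayBelow.

Theorem proposition2p6 (disp : Order.disp_t) (T : porderType disp) :
  @cond_complete disp T -> @interpolating disp T ->
  forall x : T, star (star fullset) x <-> star fullset x.
Proof.
move=> cc ip x; split; first by case.
move=> xs; have [_ [y [_ wyx]]] := xs.
have [z [wyz wzx]] := ip _ _ wyx.
split=> //; exists z; split.
- by split=> //; exists y.
- exact: way_below_in_upper_closed cc upper_closed_star_full wzx.
Qed.
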